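(* Assume $N\ge 2$ and $2\beta T>1$, and let $S\ge 1$ be an integer. (a) The Fixed-Share Forecaster (FSF) with parameters \[ \alpha=\frac1T,\qquad \gamma=\frac{1}{2\beta T},\qquad \eta=\sqrt{\frac{\log(NT)}{4\beta^2T\log\left(2\beta TN^3+N+2\right)}} \] satisfies, for every demand sequence $d_1,\dots,d_T\in\mathcal D$, \[ \mathbb E[\mathcal R_S(T)]\le 2(S+1)\beta\sqrt{T\log(NT)\log\left(2\beta TN^3+N+2\right)}+2\beta\sqrt{T\log N}+2. \] (b) The FSF with parameters \[ \alpha=\frac1T,\qquad \gamma=\frac{1}{2\beta T},\qquad \eta=\sqrt{\frac{S\log(NT)}{4\beta^2T\log\left(2\beta TN^3+N+2\right)}} \] satisfies, for every demand sequence $d_1,\dots,d_T\in\mathcal D$, \[ \mathbb E[\mathcal R_S(T)]\le 4\beta\sqrt{ST\log(NT)\log\left(2\beta TN^3+N+2\right)}+2\beta\sqrt{T\log N}+2. \]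
   Context: Fix integers $T\ge1$, $D\ge 1$ and reals $h,b>0$. Let $\mathcal T=\{1,\dots,T\}$, $\mathcal D=\{0,1,\dots,D\}$, let $\mathcal I\subseteq\mathcal D$ with $|\mathcal I|=N$, let $\beta=D\max\{h,b\}$, and let $c(i,d)=h(i-d)^+ + b(d-i)^+$. Logarithms are natural. For $d\in\mathcal D$, $e_d\in\mathbb R^{D+1}$ is the standard basis vector (coordinates indexed by $\{0,\dots,D\}$) with a $1$ in coordinate $d$. For $i\in\mathcal D$, the signal matrix $\mathbb S_i$ is the $(i+1)\times(D+1)$ $0/1$ matrix with rows indexed by $k\in\{1,\dots,i+1\}$ and columns by $d\in\{0,\dots,D\}$, with $\mathbb S_i(k,d)=1$ iff $\min\{i,d\}=k-1$; and $v_i\in\mathbb R^{i+1}$ is defined by $v_i(k)=hi-(h+b)(k-1)$, $k=1,\dots,i+1$. A demand sequence $d_1,\dots,d_T\in\mathcal D$ is fixed arbitrarily in advance. FSF policy with parameters $\eta>0$, $\gamma\in(0,1)$, $\alpha>0$: set $W_i(0)=1$ for all $i\in\mathcal I$. For $t=1,\dots,T$: let $W(t-1)=\sum_{i\in\mathcal I}W_i(t-1)$ and $p_i(t)=(1-\gamma)\frac{W_i(t-1)}{W(t-1)}+\frac{\gamma}{N}$; draw $I_t\in\mathcal I$ with $\mathbb P(I_t=i\mid I_1,\dots,I_{t-1})=p_i(t)$; observe $\min\{I_t,d_t\}$; for each $i\in\mathcal I$ compute $\tilde c(i,d_t)=\frac{\mathbb 1\{I_t\ge i\}}{\mathbb P_t(I_t\ge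 i)}\left(v_i^T\mathbb S_ie_{d_t}+\beta\right)$ with $\mathbb P_t(I_t\ge i)=\sum_{j\in\mathcal I,\,j\ge i}p_j(t)$; and set $W_i(t)=W_i(t-1)e^{-\eta\tilde c(i,d_t)}+\frac{\alpha}{N}\sum_{j\in\mathcal I}W_j(t-1)$. For a sequence $i_{[T]}=(i_1,\dots,i_T)\in\mathcal I^T$, its complexity is $C(i_{[T]})=\sum_{t=1}^{T}\mathbb 1\{i_t\ne i_{t+1}\}$ with the convention that the term for $t=T$ equals $1$ (so $C(i_{[T]})$ is the number of maximal blocks of consecutive periods on which $i_{[T]}$ is constant). Let $\mathcal I^T_S=\{i_{[T]}\in\mathcal I^T: C(i_{[T]})\le S\}$. The tracking regret is $\mathcal R_S(T)=\sum_{t\in\mathcal T}c(I_t,d_t)-\min_{i_{[T]}\in\mathcal I^T_S}\sum_{t\in\mathcal T}c(i_t,d_t)$; expectation is over the policy's randomization. *)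

From Stdlib Require Import Reals List Lia Lra.
Import ListNotations.
Open Scope R_scope.

Definition rsum (l : list R) : R := fold_right Rplus 0 l.

Definition cost (h b : R) (i d : nat) : R :=
  h * Rmax (INR i - INR d) 0 + b * Rmax (INR d - INR i) 0.

Definition beta (D : nat) (h b : R) : R := INR D * Rmax h b.

(* signal matrix S_i : entry (k,d), k in {1..i+1}, d in {0..D};
   equals 1 iff min{i,d} = k-1 *)
Definition sigmx (i k d : nat) : R :=
  if Nat.eqb (Nat.min i d) (k - 1)%nat then 1 else 0.

Definition vvec (h b : R) (i k : nat) : R := h * INR i - (h + b) * INR (k - 1).

Definition vSe (h b : R) (i d : nat) : R :=
  rsum (map (fun k => vvec h b i k * sigmx i k d) (seq 1 (i + 1))).

Definition Wtot (I : list nat) (W : nat -> R) : R := rsum (map W I).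

Definition pprob (I : list nat) (gamma : R) (W : nat -> R) (i : nat) : R :=
  (1 - gamma) * (W i / Wtot I W) + gamma / INR (length I).

Definition Pge (I : list nat) (gamma : R) (W : nat -> R) (i : nat) : R :=
  rsum (map (pprob I gamma W) (filter (fun j => Nat.leb i j) I)).

(* importance-weighted cost estimate  c~(i, d_t), given the drawn action a = I_t *)
Definition ctilde (h b : R) (D : nat) (I : list nat) (gamma : R) (W : nat -> R)
  (a i dt : nat) : R :=
  (if Nat.leb i a then 1 else 0) / Pge I gamma W i * (vSe h b i dt + beta D h b).

Definition Wnext (h b : R) (D : nat) (I : list nat) (eta gamma alpha : R)
  (W : nat -> R) (a dt : nat) : nat -> R :=
  fun i => W i * exp (- eta * ctilde h b D I gamma W a i dt)
           + alpha / INR (length I) * Wtot I W.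

(* Probability that the FSF policy draws the sequence [I_t; I_{t+1}; ...]
   given the weight vector W = W(t-1) at the start of period t:
   product of the conditional probabilities p_{I_s}(s). *)
Fixpoint seq_prob (h b : R) (D : nat) (I : list nat) (eta gamma alpha : R)
  (d : nat -> nat) (t : nat) (W : nat -> R) (hist : list nat) : R :=
  match hist with
  | [] => 1
  | a :: r => pprob I gamma W a *
              seq_prob h b D I eta gamma alpha d (S t)
                (Wnext h b D I eta gamma alpha W a (d t)) r
  end.

Definition FSF_prob (h b : R) (D : nat) (I : list nat) (eta gamma alpha : R)
  (d : nat -> nat) (s : list nat) : R :=
  seq_prob h b D I eta gamma alpha d 1 (fun _ => 1) s.

Fixpoint path_cost (h b : R) (d : nat -> nat) (t : nat) (s : list nat) : R :=
  match s with
  | [] => 0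
  | a :: r => cost h b a (d t) + path_cost h b d (S t) r
  end.

Fixpoint all_seqs (I : list nat) (n : nat) : list (list nat) :=
  match n with
  | O => [[]]
  | S n' => flat_map (fun a => map (cons a) (all_seqs I n')) I
  end.

Fixpoint complexity (s : list nat) : nat :=
  match s with
  | [] => 0
  | [x] => 1
  | x :: ((y :: _) as r) => ((if Nat.eqb x y then 0 else 1) + complexity r)%nat
  end.

Definition list_min (l : list R) : R :=
  match l with
  | [] => 0
  | x :: r => fold_right Rmin x r
  end.

Definition benchmark (h b : R) (I : list nat) (d : nat -> nat) (T S : nat) : R :=
  list_min (map (path_cost h b d 1)
    (filter (fun s => Nat.leb (complexity s) S) (all_seqs I T))).

(* E[R_S(T)] for FSF with parameters eta, gamma, alpha: expectation over the
   policy's randomization, i.e. sum over all realizations (I_1..I_T) in I^T *)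
Definition FSF_expected_regret (h b : R) (D : nat) (I : list nat)
  (eta gamma alpha : R) (d : nat -> nat) (T S : nat) : R :=
  rsum (map (fun s => FSF_prob h b D I eta gamma alpha d s *
                      (path_cost h b d 1 s - benchmark h b I d T S))
            (all_seqs I T)).

From Stdlib Require Import Reals List Lra Lia.
From Coquelicot Require Coquelicot.
Import ListNotations.
Open Scope R_scope.

(* The Fixed-Share forecaster is analysed through the potential
   ln W(t) - ln W_u(t) of a comparator u.  In one period it drops by eta times the
   forecaster's averaged estimated loss minus the estimated loss of u, up to a
   second-order term eta^2 E[c~^2] / 2 and the mixing term alpha; a switch of the
   comparator costs ln (N / alpha).  The estimate c~(i, d) is unbiased for
   c(i, d) - b d + beta, and the shift b d is common to all actions, so it cancels
   in the regret.  The second moment is at most 4 beta^2 sum_i q_i / P(I_t >= i),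
   and because every probability is at least gamma / N these tail ratios telescope
   to at most 2 (1 + ln (N / gamma)).  Summing over the T periods along an optimal
   comparator with at most S blocks bounds the expected regret by
   ln N / eta + T (gamma beta + 4 eta beta^2 (1 + ln (N / gamma)) + alpha / eta)
   + (S - 1) ln (N / alpha) / eta, which the stated parameters balance; for very
   short horizons the trivial bound T beta suffices. *)

Section ExpQuadraticBound.
Import Coquelicot.Coquelicot.

Lemma exp_neg_le_quadratic (x : R) : 0 <= x -> exp (- x) <= 1 - x + x ^ 2 / 2.
Proof.
  intros Hx.
  assert (Hg : 1 <= (1 - x + x ^ 2 / 2) * exp x).
  { destruct (Req_dec x 0) as [->|Hx0]; [rewrite exp_0; lra|].
    destruct (MVT_cor2 (fun y => (1 - y + y ^ 2 / 2) * exp y)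
                       (fun y => y ^ 2 / 2 * exp y) 0 x) as [c [Hc _]]; [lra| |].
    - intros c _. apply is_derive_Reals. auto_derive; [easy|field].
    - rewrite exp_0 in Hc.
      assert (0 <= c ^ 2 / 2 * exp c * (x - 0)).
      { apply Rmult_le_pos; [|lra].
        apply Rmult_le_pos; [nra|left; apply exp_pos]. }
      lra. }
  rewrite exp_Ropp. pose proof (exp_pos x).
  apply (Rmult_le_reg_r (exp x)); [easy|]. rewrite Rinv_l; lra.
Qed.

End ExpQuadraticBound.

Lemma ln_le (x y : R) : 0 < x -> x <= y -> ln x <= ln y.
Proof. intros Hx [Hxy|<-]; [left; apply ln_increasing|]; lra. Qed.

Lemma ln_le_sub_1 (y : R) : 0 < y -> ln y <= y - 1.
Proof. intros Hy. pose proof (exp_ineq1_le (ln y)). rewrite exp_ln in H; lra. Qed.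

Lemma ln_div (x y : R) : 0 < x -> 0 < y -> ln (x / y) = ln x - ln y.
Proof.
  intros Hx Hy. unfold Rdiv.
  rewrite ln_mult, ln_Rinv; [ring| |easy|]; auto using Rinv_0_lt_compat.
Qed.

Lemma ln_ge_0 (x : R) : 1 <= x -> 0 <= ln x.
Proof. intros Hx. rewrite <- ln_1. apply ln_le; lra. Qed.

Section ListSums.
Context {A : Type}.

Lemma rsum_cons (x : R) (l : list R) : rsum (x :: l) = x + rsum l.
Proof. reflexivity. Qed.

Lemma rsum_app (l1 l2 : list R) : rsum (l1 ++ l2) = rsum l1 + rsum l2.
Proof. induction l1 as [|x l1 IH]; simpl app; [cbn; ring|]. rewrite !rsum_cons, IH. ring. Qed.

Lemma rsum_plus (f g : A -> R) (l : list A) :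
  rsum (map (fun x => f x + g x) l) = rsum (map f l) + rsum (map g l).
Proof. induction l as [|x l IH]; simpl map; [cbn; ring|]. rewrite !rsum_cons, IH. ring. Qed.

Lemma rsum_minus (f g : A -> R) (l : list A) :
  rsum (map (fun x => f x - g x) l) = rsum (map f l) - rsum (map g l).
Proof. induction l as [|x l IH]; simpl map; [cbn; ring|]. rewrite !rsum_cons, IH. ring. Qed.

Lemma rsum_scal (c : R) (f : A -> R) (l : list A) :
  rsum (map (fun x => c * f x) l) = c * rsum (map f l).
Proof. induction l as [|x l IH]; simpl map; [cbn; ring|]. rewrite !rsum_cons, IH. ring. Qed.

Lemma rsum_const (c : R) (l : list A) : rsum (map (fun _ => c) l) = INR (length l) * c.
Proof.
  induction l as [|x l IH]; simpl map; [cbn; ring|].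
  rewrite rsum_cons, IH. simpl length. rewrite S_INR. ring.
Qed.

Lemma rsum_ext (f g : A -> R) (l : list A) :
  (forall x, In x l -> f x = g x) -> rsum (map f l) = rsum (map g l).
Proof.
  induction l as [|x l IH]; intros Hfg; [easy|]. simpl map. rewrite !rsum_cons.
  rewrite (Hfg x) by (left; easy). rewrite IH by (intros; apply Hfg; right; easy). easy.
Qed.

Lemma rsum_le (f g : A -> R) (l : list A) :
  (forall x, In x l -> f x <= g x) -> rsum (map f l) <= rsum (map g l).
Proof.
  induction l as [|x l IH]; intros Hfg; simpl map; [cbn; lra|]. rewrite !rsum_cons.
  pose proof (Hfg x (or_introl eq_refl)). pose proof (IH (fun y Hy => Hfg y (or_intror Hy))). lra.
Qed.

Lemma rsum_nonneg (f : A -> R) (l : list A) :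
  (forall x, In x l -> 0 <= f x) -> 0 <= rsum (map f l).
Proof. intros Hf. pose proof (rsum_le (fun _ => 0) f l Hf). rewrite rsum_const in H. lra. Qed.

Lemma rsum_member_le (f : A -> R) (l : list A) (y : A) :
  (forall x, In x l -> 0 <= f x) -> In y l -> f y <= rsum (map f l).
Proof.
  induction l as [|x l IH]; intros Hf Hy; [destruct Hy|]. simpl map. rewrite rsum_cons.
  pose proof (Hf x (or_introl eq_refl)).
  pose proof (rsum_nonneg f l (fun z Hz => Hf z (or_intror Hz))).
  destruct Hy as [<-|Hy]; [lra|].
  pose proof (IH (fun z Hz => Hf z (or_intror Hz)) Hy). lra.
Qed.

End ListSums.

Lemma rsum_flat_map {A B : Type} (F : B -> R) (G : A -> list B) (l : list A) :
  rsum (map F (flat_map G l)) = rsum (map (fun a => rsum (map F (G a))) l).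
Proof.
  induction l as [|x l IH]; [easy|]. simpl flat_map. simpl map.
  rewrite map_app, rsum_app, IH, rsum_cons. easy.
Qed.

Lemma rsum_comm {A B : Type} (g : A -> B -> R) (l1 : list A) (l2 : list B) :
  rsum (map (fun a => rsum (map (g a) l2)) l1) =
  rsum (map (fun i => rsum (map (fun a => g a i) l1)) l2).
Proof.
  induction l1 as [|x l1 IH]; simpl map.
  - change (0 = rsum (map (fun _ : B => 0) l2)). rewrite rsum_const. ring.
  - rewrite rsum_cons, IH, <- rsum_plus. easy.
Qed.

Lemma rsum_mul_rsum_comm {A B : Type} (l1 : list A) (l2 : list B)
  (p : A -> R) (q : B -> R) (g : A -> B -> R) :
  rsum (map (fun a => p a * rsum (map (fun i => q i * g a i) l2)) l1) =
  rsum (map (fun i => q i * rsum (map (fun a => p a * g a i) l1)) l2).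
Proof.
  rewrite (rsum_ext _ (fun a => rsum (map (fun i => p a * (q i * g a i)) l2)))
    by (intros; rewrite <- rsum_scal; easy).
  rewrite rsum_comm. apply rsum_ext. intros i _.
  rewrite <- rsum_scal. apply rsum_ext. intros; ring.
Qed.

Lemma rsum_filter (P : nat -> bool) (f : nat -> R) (l : list nat) :
  rsum (map f (filter P l)) = rsum (map (fun x => if P x then f x else 0) l).
Proof.
  induction l as [|x l IH]; [easy|]. simpl filter. simpl map.
  rewrite (rsum_cons (if P x then f x else 0)).
  destruct (P x); simpl map; rewrite ?rsum_cons, IH; ring.
Qed.

Lemma rsum_remove (f : nat -> R) (l : list nat) (x : nat) :
  NoDup l -> In x l -> rsum (map f l) = f x + rsum (map f (remove Nat.eq_dec x l)).
Proof.
  induction l as [|y l IH]; intros Hnd Hx; [destruct Hx|]. inversion Hnd; subst.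
  simpl remove. destruct (Nat.eq_dec x y) as [->|Hxy].
  - rewrite notin_remove; easy.
  - destruct Hx as [->|Hx]; [congruence|]. simpl map.
    rewrite !rsum_cons, (IH H2 Hx). ring.
Qed.

Definition tail_sum (I : list nat) (w : nat -> R) (i : nat) : R :=
  rsum (map (fun j => if Nat.leb i j then w j else 0) I).

Lemma list_min_exists (I : list nat) :
  I <> [] -> exists i0, In i0 I /\ forall j, In j I -> (i0 <= j)%nat.
Proof.
  induction I as [|a I IH]; intros Hne; [congruence|].
  destruct I as [|c I'].
  - exists a. split; [left; easy|]. intros j [->|[]]. lia.
  - destruct (IH ltac:(discriminate)) as [i0 [Hi0 Hmin]].
    destruct (Nat.le_gt_cases a i0).
    + exists a. split; [left; easy|]. intros j [->|Hj]; [lia|]. specialize (Hmin j Hj). lia.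
    + exists i0. split; [right; easy|]. intros j [->|Hj]; [lia|auto].
Qed.

Lemma NoDup_remove_nat (x : nat) (l : list nat) :
  NoDup l -> NoDup (remove Nat.eq_dec x l).
Proof.
  induction l as [|y l IH]; intros Hnd; [easy|]. inversion Hnd; subst. simpl.
  destruct (Nat.eq_dec x y); [auto|]. constructor; [|auto].
  intros Hy. apply in_remove in Hy. tauto.
Qed.

Lemma div_le_ln_ratio (a t : R) : 0 < a -> 0 < t -> a / (a + t) <= ln (a + t) - ln t.
Proof.
  intros Ha Ht.
  pose proof (ln_le_sub_1 (t / (a + t)) ltac:(apply Rdiv_lt_0_compat; lra)) as Hln.
  rewrite ln_div in Hln by lra.
  replace (t / (a + t) - 1) with (- (a / (a + t))) in Hln by (field; lra). lra.
Qed.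

(* Removing the smallest index i0 leaves every other tail sum unchanged, while
   the tail at i0 is the whole sum; this is the induction step. *)
Lemma sum_div_tail_sum_le (I : list nat) (w : nat -> R) (m : R) :
  NoDup I -> I <> [] -> 0 < m -> (forall i, In i I -> m <= w i) ->
  rsum (map (fun i => w i / tail_sum I w i) I) <= 1 + ln (rsum (map w I) / m).
Proof.
  remember (length I) as n eqn:Hn. revert I Hn.
  induction n as [n IH] using (well_founded_induction Wf_nat.lt_wf). intros I Hn Hnd Hne Hm Hw.
  destruct (list_min_exists I Hne) as [i0 [Hi0 Hmin]].
  set (J := remove Nat.eq_dec i0 I).
  assert (HJw : forall i, In i J -> m <= w i)
    by (intros i Hi; apply in_remove in Hi; apply Hw; tauto).
  assert (Htail0 : tail_sum I w i0 = rsum (map w I)).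
  { apply rsum_ext. intros j Hj. specialize (Hmin j Hj).
    destruct (Nat.leb_spec i0 j); [easy|lia]. }
  assert (HtailJ : forall i, In i J -> tail_sum I w i = tail_sum J w i).
  { intros i Hi. unfold tail_sum. rewrite (rsum_remove _ I i0) by easy.
    apply in_remove in Hi. destruct Hi as [Hi Hi0'].
    specialize (Hmin i Hi). destruct (Nat.leb_spec i i0); [lia|]. fold J. lra. }
  rewrite (rsum_remove (fun i => w i / tail_sum I w i) I i0) by easy.
  fold J. rewrite Htail0, (rsum_remove w I i0) by easy. fold J.
  rewrite (rsum_ext (fun i => w i / tail_sum I w i) (fun i => w i / tail_sum J w i) J)
    by (intros i Hi; rewrite HtailJ; easy).
  assert (Hw0 : m <= w i0) by auto.
  destruct J as [|j J'] eqn:HJ.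
  - cbn. rewrite !Rplus_0_r. replace (w i0 / w i0) with 1 by (field; lra).
    assert (0 <= ln (w i0 / m)).
    { apply ln_ge_0, (Rmult_le_reg_r m); [easy|].
      unfold Rdiv. rewrite Rmult_assoc, Rinv_l; lra. }
    lra.
  - rewrite <- HJ in *.
    assert (HJlen : (length J < n)%nat)
      by (subst J n; apply remove_length_lt; easy).
    assert (HJnd : NoDup J) by (subst J; apply NoDup_remove_nat; easy).
    pose proof (IH _ HJlen J eq_refl HJnd ltac:(rewrite HJ; discriminate) Hm HJw) as IHJ.
    assert (Ht : 0 < rsum (map w J)).
    { pose proof (rsum_member_le w J j
        (fun x Hx => Rle_trans _ _ _ (Rlt_le _ _ Hm) (HJw x Hx)) ltac:(rewrite HJ; left; easy)).
      pose proof (HJw j ltac:(rewrite HJ; left; easy)). lra. }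
    pose proof (div_le_ln_ratio (w i0) (rsum (map w J)) ltac:(lra) Ht).
    rewrite ln_div in IHJ |- * by lra. lra.
Qed.

Lemma rsum_indicator_seq (f : nat -> R) (c len s : nat) : (1 <= s)%nat ->
  rsum (map (fun k => f k * (if Nat.eqb c (k - 1) then 1 else 0)) (seq s len)) =
  if (Nat.leb s (c + 1) && Nat.ltb (c + 1) (s + len))%bool then f (c + 1)%nat else 0.
Proof.
  revert s. induction len as [|len IH]; intros s Hs.
  - simpl. destruct (Nat.leb_spec s (c + 1)), (Nat.ltb_spec (c + 1) (s + 0)); simpl; auto; lia.
  - simpl seq. simpl map. rewrite rsum_cons, IH by lia.
    destruct (Nat.eqb_spec c (s - 1)) as [->|Hc].
    + destruct (Nat.leb_spec (S s) (s - 1 + 1)); [lia|].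
      destruct (Nat.leb_spec s (s - 1 + 1)), (Nat.ltb_spec (s - 1 + 1) (s + S len));
        simpl; try lia.
      replace (s - 1 + 1)%nat with s by lia. ring.
    + destruct (Nat.leb_spec (S s) (c + 1)), (Nat.ltb_spec (c + 1) (S s + len)),
        (Nat.leb_spec s (c + 1)), (Nat.ltb_spec (c + 1) (s + S len)); simpl; try ring; lia.
Qed.

(* The signal v_i^T S_i e_d only depends on min(i, d), yet up to the shift b d,
   which does not depend on i, it equals the cost c(i, d). *)
Lemma vSe_cost (h b : R) (i d : nat) : vSe h b i d = cost h b i d - b * INR d.
Proof.
  unfold vSe, sigmx. rewrite (rsum_indicator_seq _ (Nat.min i d) (i + 1) 1) by lia.
  replace (Nat.leb 1 (Nat.min i d + 1) && Nat.ltb (Nat.min i d + 1) (1 + (i + 1)))%bool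
    with true by (symmetry; apply andb_true_intro; split; [apply Nat.leb_le|apply Nat.ltb_lt]; lia).
  unfold vvec, cost. replace (Nat.min i d + 1 - 1)%nat with (Nat.min i d) by lia.
  destruct (Nat.le_ge_cases i d) as [Hid|Hid]; pose proof (le_INR _ _ Hid).
  - rewrite Nat.min_l, Rmax_right, Rmax_left by (lia || lra). ring.
  - rewrite Nat.min_r, Rmax_left, Rmax_right by (lia || lra). ring.
Qed.

Lemma cost_bounds (h b : R) (D i d : nat) : 0 < h -> 0 < b -> (i <= D)%nat -> (d <= D)%nat ->
  0 <= cost h b i d <= beta D h b.
Proof.
  intros Hh Hb HiD HdD. unfold cost, beta.
  pose proof (Rmax_l h b). pose proof (Rmax_r h b).
  apply le_INR in HiD, HdD. pose proof (pos_INR i). pose proof (pos_INR d).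
  destruct (Nat.le_ge_cases i d) as [Hid|Hid]; apply le_INR in Hid.
  - rewrite Rmax_right, Rmax_left by lra. split; [nra|].
    assert (b * (INR d - INR i) <= Rmax h b * INR D) by (apply Rmult_le_compat; lra). lra.
  - rewrite Rmax_left, Rmax_right by lra. split; [nra|].
    assert (h * (INR i - INR d) <= Rmax h b * INR D) by (apply Rmult_le_compat; lra). lra.
Qed.

Lemma vSe_shift_bounds (h b : R) (D i d : nat) : 0 < h -> 0 < b -> (i <= D)%nat -> (d <= D)%nat ->
  0 <= vSe h b i d + beta D h b <= 2 * beta D h b.
Proof.
  intros Hh Hb HiD HdD. rewrite vSe_cost. pose proof (cost_bounds h b D i d Hh Hb HiD HdD).
  assert (0 <= b * INR d <= beta D h b).
  { unfold beta. pose proof (Rmax_r h b). apply le_INR in HdD. pose proof (pos_INR d).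
    split; [nra|]. rewrite Rmult_comm. apply Rmult_le_compat; lra. }
  lra.
Qed.

Lemma complexity_repeat_le (i n : nat) : (complexity (repeat i n) <= 1)%nat.
Proof.
  induction n as [|[|n] IH]; [simpl; lia|simpl; lia|].
  simpl repeat in *. cbn [complexity]. rewrite Nat.eqb_refl. easy.
Qed.

Section FixedShare.

Variables (h b : R) (D : nat) (I : list nat) (eta gamma alpha : R).
Hypotheses (h_pos : 0 < h) (b_pos : 0 < b) (I_ne : I <> []) (I_nodup : NoDup I)
  (I_le_D : forall i, In i I -> (i <= D)%nat)
  (eta_pos : 0 < eta) (gamma_range : 0 < gamma < 1) (gamma_le_half : gamma <= 1 / 2)
  (alpha_pos : 0 < alpha).

Local Notation p := (pprob I gamma).
Local Notation ct := (ctilde h b D I gamma).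
Local Notation Wn := (Wnext h b D I eta gamma alpha).

Definition weights_pos (W : nat -> R) : Prop := forall i, In i I -> 0 < W i.

Definition wprob (W : nat -> R) (i : nat) : R := W i / Wtot I W.

Definition potential (W : nat -> R) (u : nat) : R := ln (Wtot I W) - ln (W u).

Lemma length_pos : 0 < INR (length I).
Proof. destruct I; [congruence|]. simpl length. apply lt_0_INR. lia. Qed.

Lemma Wtot_ge_member (W : nat -> R) (u : nat) :
  weights_pos W -> In u I -> W u <= Wtot I W.
Proof. intros HW Hu. apply rsum_member_le; [|easy]. intros. left; auto. Qed.

Lemma Wtot_pos (W : nat -> R) : weights_pos W -> 0 < Wtot I W.
Proof.
  intros HW. destruct I as [|u I'] eqn:HI; [congruence|]. rewrite <- HI in *.
  assert (Hu : In u I) by (rewrite HI; left; easy).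
  pose proof (Wtot_ge_member W u HW Hu). pose proof (HW u Hu). lra.
Qed.

Lemma potential_nonneg (W : nat -> R) (u : nat) : weights_pos W -> In u I -> 0 <= potential W u.
Proof.
  intros HW Hu. unfold potential.
  pose proof (ln_le _ _ (HW u Hu) (Wtot_ge_member W u HW Hu)). lra.
Qed.

Lemma wprob_nonneg (W : nat -> R) (i : nat) : weights_pos W -> In i I -> 0 <= wprob W i.
Proof. intros HW Hi. left. apply Rdiv_lt_0_compat; auto using Wtot_pos. Qed.

Lemma rsum_wprob (W : nat -> R) : weights_pos W -> rsum (map (wprob W) I) = 1.
Proof.
  intros HW. pose proof (Wtot_pos W HW).
  rewrite (rsum_ext _ (fun i => / Wtot I W * W i)) by (intros; unfold wprob; field; lra).
  rewrite rsum_scal. fold (Wtot I W). field. lra.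
Qed.

Lemma pprob_wprob (W : nat -> R) (i : nat) :
  p W i = (1 - gamma) * wprob W i + gamma / INR (length I).
Proof. reflexivity. Qed.

Lemma pprob_ge (W : nat -> R) (i : nat) :
  weights_pos W -> In i I -> gamma / INR (length I) <= p W i.
Proof.
  intros HW Hi. rewrite pprob_wprob.
  pose proof (Rmult_le_pos (1 - gamma) _ ltac:(lra) (wprob_nonneg W i HW Hi)). lra.
Qed.

Lemma pprob_pos (W : nat -> R) (i : nat) : weights_pos W -> In i I -> 0 < p W i.
Proof.
  intros HW Hi. pose proof (pprob_ge W i HW Hi). pose proof length_pos.
  assert (0 < gamma / INR (length I)) by (apply Rdiv_lt_0_compat; lra). lra.
Qed.

Lemma rsum_pprob (W : nat -> R) : weights_pos W -> rsum (map (p W) I) = 1.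
Proof.
  intros HW. unfold pprob. rewrite rsum_plus, rsum_scal, rsum_const.
  pose proof (rsum_wprob W HW) as Hq. unfold wprob in Hq. rewrite Hq.
  pose proof length_pos. field. lra.
Qed.

Lemma Pge_tail_sum (W : nat -> R) (i : nat) : Pge I gamma W i = tail_sum I (p W) i.
Proof. apply rsum_filter. Qed.

Lemma Pge_pos (W : nat -> R) (i : nat) : weights_pos W -> In i I -> 0 < Pge I gamma W i.
Proof.
  intros HW Hi. rewrite Pge_tail_sum.
  pose proof (rsum_member_le (fun j => if Nat.leb i j then p W j else 0) I i) as Hpi.
  cbv beta in Hpi. rewrite Nat.leb_refl in Hpi. pose proof (pprob_pos W i HW Hi).
  enough (p W i <= tail_sum I (p W) i) by lra. apply Hpi; [|easy].
  intros j Hj. destruct (Nat.leb i j); [left; apply pprob_pos|]; auto; lra.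
Qed.

Lemma rsum_pprob_indicator (W : nat -> R) (i : nat) (g : R) :
  rsum (map (fun a => p W a * ((if Nat.leb i a then 1 else 0) / Pge I gamma W i * g)) I)
  = g / Pge I gamma W i * Pge I gamma W i.
Proof.
  rewrite Pge_tail_sum at 2. unfold tail_sum. rewrite <- rsum_scal.
  apply rsum_ext. intros a _. destruct (Nat.leb i a); unfold Rdiv; ring.
Qed.

Lemma ctilde_nonneg (W : nat -> R) (a i dt : nat) :
  weights_pos W -> In i I -> (dt <= D)%nat -> 0 <= ct W a i dt.
Proof.
  intros HW Hi Hdt. unfold ctilde. pose proof (Pge_pos W i HW Hi).
  pose proof (vSe_shift_bounds h b D i dt h_pos b_pos (I_le_D i Hi) Hdt).
  apply Rmult_le_pos; [|lra]. apply Rmult_le_pos; [destruct (Nat.leb i a); lra|].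
  left; apply Rinv_0_lt_compat; easy.
Qed.

Lemma ctilde_mean (W : nat -> R) (i dt : nat) : weights_pos W -> In i I ->
  rsum (map (fun a => p W a * ct W a i dt) I) = vSe h b i dt + beta D h b.
Proof.
  intros HW Hi. unfold ctilde. rewrite rsum_pprob_indicator.
  pose proof (Pge_pos W i HW Hi). field. lra.
Qed.

Lemma ctilde_second_moment (W : nat -> R) (i dt : nat) : weights_pos W -> In i I ->
  rsum (map (fun a => p W a * (ct W a i dt) ^ 2) I)
  = (vSe h b i dt + beta D h b) ^ 2 / Pge I gamma W i.
Proof.
  intros HW Hi. pose proof (Pge_pos W i HW Hi).
  rewrite (rsum_ext _ (fun a => p W a * ((if Nat.leb i a then 1 else 0) / Pge I gamma W i *
       ((vSe h b i dt + beta D h b) ^ 2 / Pge I gamma W i))))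
    by (intros a _; unfold ctilde; destruct (Nat.leb i a); field; lra).
  rewrite rsum_pprob_indicator. field. lra.
Qed.

Lemma Wnext_pos (W : nat -> R) (a dt : nat) : weights_pos W -> weights_pos (Wn W a dt).
Proof.
  intros HW i Hi. unfold Wnext. pose proof (HW i Hi). pose proof (exp_pos (- eta * ct W a i dt)).
  pose proof (Wtot_pos W HW). pose proof length_pos.
  assert (0 < alpha / INR (length I) * Wtot I W)
    by (apply Rmult_lt_0_compat; [apply Rdiv_lt_0_compat|]; easy).
  nra.
Qed.

Lemma Wtot_Wnext (W : nat -> R) (a dt : nat) :
  Wtot I (Wn W a dt) = rsum (map (fun i => W i * exp (- eta * ct W a i dt)) I) + alpha * Wtot I W.
Proof.
  unfold Wtot at 1, Wnext. rewrite rsum_plus, rsum_const.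
  pose proof length_pos. field. lra.
Qed.

(* The exploration floor gamma / N makes the tail probabilities telescope. *)
Lemma rsum_wprob_div_Pge_le (W : nat -> R) : weights_pos W ->
  rsum (map (fun i => wprob W i / Pge I gamma W i) I) <= 2 * (1 + ln (INR (length I) / gamma)).
Proof.
  intros HW. pose proof length_pos.
  assert (Hm : 0 < gamma / INR (length I)) by (apply Rdiv_lt_0_compat; lra).
  pose proof (sum_div_tail_sum_le I (p W) _ I_nodup I_ne Hm (fun i Hi => pprob_ge W i HW Hi)) as Htel.
  rewrite rsum_pprob in Htel by easy.
  replace (1 / (gamma / INR (length I))) with (INR (length I) / gamma) in Htel by (field; lra).
  assert (Hln : 0 <= ln (INR (length I) / gamma)).
  { apply ln_ge_0. apply (Rmult_le_reg_r gamma); [lra|].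
    unfold Rdiv. rewrite Rmult_assoc, Rinv_l by lra.
    assert (1 <= INR (length I)).
    { destruct I as [|x I']; [congruence|]. simpl length. rewrite S_INR.
      pose proof (pos_INR (length I')). lra. }
    lra. }
  apply Rle_trans with (rsum (map (fun i => 2 * (p W i / tail_sum I (p W) i)) I)).
  - apply rsum_le. intros i Hi. rewrite <- Pge_tail_sum.
    pose proof (Pge_pos W i HW Hi). pose proof (wprob_nonneg W i HW Hi).
    assert (wprob W i <= 2 * p W i) by (rewrite pprob_wprob; nra).
    unfold Rdiv. rewrite <- Rmult_assoc.
    apply Rmult_le_compat_r; [left; apply Rinv_0_lt_compat|]; easy.
  - rewrite rsum_scal. lra.
Qed.

Lemma ln_Wtot_Wnext_le (W : nat -> R) (a dt : nat) : weights_pos W -> (dt <= D)%nat ->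
  ln (Wtot I (Wn W a dt)) - ln (Wtot I W) <=
  - eta * rsum (map (fun i => wprob W i * ct W a i dt) I)
  + eta ^ 2 / 2 * rsum (map (fun i => wprob W i * (ct W a i dt) ^ 2) I) + alpha.
Proof.
  intros HW Hdt.
  pose proof (Wtot_pos W HW) as HZ. pose proof (Wtot_pos _ (Wnext_pos W a dt HW)) as HZ'.
  rewrite <- ln_div by easy.
  eapply Rle_trans; [apply ln_le_sub_1, Rdiv_lt_0_compat; easy|].
  rewrite Wtot_Wnext.
  replace ((rsum (map (fun i => W i * exp (- eta * ct W a i dt)) I) + alpha * Wtot I W) / Wtot I W)
    with (rsum (map (fun i => wprob W i * exp (- (eta * ct W a i dt))) I) + alpha).
  2:{ rewrite (rsum_ext _ (fun i => / Wtot I W * (W i * exp (- eta * ct W a i dt)))).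
      - rewrite rsum_scal. field. lra.
      - intros i _. unfold wprob. rewrite Ropp_mult_distr_l. field. lra. }
  assert (Hexp : rsum (map (fun i => wprob W i * exp (- (eta * ct W a i dt))) I) <=
     rsum (map (fun i => wprob W i + - eta * (wprob W i * ct W a i dt)
         + eta ^ 2 / 2 * (wprob W i * (ct W a i dt) ^ 2)) I)).
  { apply rsum_le. intros i Hi.
    pose proof (ctilde_nonneg W a i dt HW Hi Hdt).
    pose proof (exp_neg_le_quadratic (eta * ct W a i dt) ltac:(nra)).
    pose proof (wprob_nonneg W i HW Hi).
    apply Rle_trans with
      (wprob W i * (1 - eta * ct W a i dt + (eta * ct W a i dt) ^ 2 / 2)).
    - apply Rmult_le_compat_l; easy.
    - right. unfold Rdiv. ring. }
  rewrite !rsum_plus, !rsum_scal, rsum_wprob in Hexp by easy.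
  lra.
Qed.

(* Weight survives either by staying on u, or, on a switch, through the shared
   fraction alpha / N of the total weight. *)
Lemma Wnext_ge_share (W : nat -> R) (a dt u0 u1 : nat) :
  weights_pos W -> In u0 I -> In u1 I -> (dt <= D)%nat ->
  (if Nat.eqb u0 u1 then 1 else alpha / INR (length I)) * (W u0 * exp (- eta * ct W a u0 dt))
  <= Wn W a dt u1.
Proof.
  intros HW H0 H1 Hdt. unfold Wnext.
  pose proof (Wtot_pos W HW). pose proof length_pos.
  pose proof (exp_pos (- eta * ct W a u1 dt)). pose proof (HW u1 H1).
  assert (Hshare : 0 < alpha / INR (length I)) by (apply Rdiv_lt_0_compat; easy).
  destruct (Nat.eqb_spec u0 u1) as [<-|_].
  - assert (0 < alpha / INR (length I) * Wtot I W) by (apply Rmult_lt_0_compat; easy). lra.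
  - assert (W u0 * exp (- eta * ct W a u0 dt) <= Wtot I W).
    { pose proof (Wtot_ge_member W u0 HW H0). pose proof (HW u0 H0).
      pose proof (ctilde_nonneg W a u0 dt HW H0 Hdt).
      assert (exp (- eta * ct W a u0 dt) <= 1).
      { rewrite <- exp_0. destruct (Req_dec (ct W a u0 dt) 0) as [->|Hct].
        - rewrite Rmult_0_r. lra.
        - left. apply exp_increasing. nra. }
      assert (W u0 * exp (- eta * ct W a u0 dt) <= W u0 * 1) by (apply Rmult_le_compat_l; lra).
      lra. }
    assert (0 < W u1 * exp (- eta * ct W a u1 dt)) by (apply Rmult_lt_0_compat; easy).
    assert (alpha / INR (length I) * (W u0 * exp (- eta * ct W a u0 dt))
            <= alpha / INR (length I) * Wtot I W) by (apply Rmult_le_compat_l; lra).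
    lra.
Qed.

Lemma neg_ln_Wnext_le (W : nat -> R) (a dt u0 u1 : nat) :
  weights_pos W -> In u0 I -> In u1 I -> (dt <= D)%nat ->
  - ln (Wn W a dt u1) <=
  - ln (W u0) + eta * ct W a u0 dt
  + (if Nat.eqb u0 u1 then 0 else 1) * ln (INR (length I) / alpha).
Proof.
  intros HW H0 H1 Hdt. pose proof length_pos.
  pose proof (HW u0 H0). pose proof (exp_pos (- eta * ct W a u0 dt)).
  assert (Hc : 0 < (if Nat.eqb u0 u1 then 1 else alpha / INR (length I))).
  { destruct (Nat.eqb u0 u1); [lra|apply Rdiv_lt_0_compat; easy]. }
  assert (Hw : 0 < W u0 * exp (- eta * ct W a u0 dt)) by (apply Rmult_lt_0_compat; easy).
  pose proof (ln_le _ _ (Rmult_lt_0_compat _ _ Hc Hw)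
                (Wnext_ge_share W a dt u0 u1 HW H0 H1 Hdt)) as Hln.
  rewrite !ln_mult, ln_exp in Hln by easy.
  enough (ln (if Nat.eqb u0 u1 then 1 else alpha / INR (length I)) =
          - ((if Nat.eqb u0 u1 then 0 else 1) * ln (INR (length I) / alpha))) by lra.
  destruct (Nat.eqb u0 u1).
  - rewrite ln_1. ring.
  - rewrite !ln_div by easy. ring.
Qed.

Lemma potential_Wnext_le (W : nat -> R) (a dt u0 u1 : nat) :
  weights_pos W -> In u0 I -> In u1 I -> (dt <= D)%nat ->
  potential (Wn W a dt) u1 / eta <=
  potential W u0 / eta - rsum (map (fun i => wprob W i * ct W a i dt) I)
  + eta / 2 * rsum (map (fun i => wprob W i * (ct W a i dt) ^ 2) I) + alpha / eta
  + ct W a u0 dt + (if Nat.eqb u0 u1 then 0 else 1) * ln (INR (length I) / alpha) / eta.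
Proof.
  intros HW H0 H1 Hdt. apply (Rmult_le_reg_r eta); [easy|].
  unfold potential. unfold Rdiv. rewrite !Rmult_plus_distr_r, !Rmult_minus_distr_r.
  rewrite !Rmult_assoc, !Rinv_l, !Rmult_1_r by lra.
  pose proof (ln_Wtot_Wnext_le W a dt HW Hdt).
  pose proof (neg_ln_Wnext_le W a dt u0 u1 HW H0 H1 Hdt).
  unfold Rdiv in *. nra.
Qed.

Definition fsf_rate : R :=
  gamma * beta D h b + 4 * eta * beta D h b ^ 2 * (1 + ln (INR (length I) / gamma)) + alpha / eta.

Lemma rsum_pprob_cost_le (W : nat -> R) (dt : nat) : weights_pos W -> (dt <= D)%nat ->
  rsum (map (fun a => p W a * cost h b a dt) I)
  <= rsum (map (fun i => wprob W i * cost h b i dt) I) + gamma * beta D h b.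
Proof.
  intros HW Hdt.
  rewrite (rsum_ext _ (fun a => (1 - gamma) * (wprob W a * cost h b a dt)
                               + gamma / INR (length I) * cost h b a dt))
    by (intros; rewrite pprob_wprob; ring).
  rewrite rsum_plus, !rsum_scal.
  assert (0 <= rsum (map (fun i => wprob W i * cost h b i dt) I)).
  { apply rsum_nonneg. intros i Hi. apply Rmult_le_pos; [apply wprob_nonneg; easy|].
    apply (cost_bounds h b D); auto. }
  assert (rsum (map (fun i => cost h b i dt) I) <= INR (length I) * beta D h b).
  { rewrite <- rsum_const. apply rsum_le. intros i Hi. apply (cost_bounds h b D); auto. }
  pose proof length_pos.
  assert (gamma / INR (length I) * rsum (map (fun i => cost h b i dt) I) <= gamma * beta D h b).
  { apply Rle_trans with (gamma / INR (length I) * (INR (length I) * beta D h b)).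
    - apply Rmult_le_compat_l; [left; apply Rdiv_lt_0_compat; lra|easy].
    - right. field. lra. }
  nra.
Qed.

Lemma rsum_wprob_second_moment_le (W : nat -> R) (dt : nat) : weights_pos W -> (dt <= D)%nat ->
  rsum (map (fun i => wprob W i * ((vSe h b i dt + beta D h b) ^ 2 / Pge I gamma W i)) I)
  <= 8 * beta D h b ^ 2 * (1 + ln (INR (length I) / gamma)).
Proof.
  intros HW Hdt.
  apply Rle_trans with
    (4 * beta D h b ^ 2 * rsum (map (fun i => wprob W i / Pge I gamma W i) I)).
  - rewrite <- rsum_scal. apply rsum_le. intros i Hi.
    pose proof (vSe_shift_bounds h b D i dt h_pos b_pos (I_le_D i Hi) Hdt).
    pose proof (Pge_pos W i HW Hi). pose proof (wprob_nonneg W i HW Hi).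
    assert ((vSe h b i dt + beta D h b) ^ 2 <= 4 * beta D h b ^ 2) by nra.
    assert (0 <= wprob W i / Pge I gamma W i)
      by (apply Rmult_le_pos; [|left; apply Rinv_0_lt_compat]; easy).
    unfold Rdiv in *. nra.
  - pose proof (rsum_wprob_div_Pge_le W HW).
    pose proof (pow2_ge_0 (beta D h b)). nra.
Qed.

(* Averaging the potential recursion over the draw a ~ p: the estimated losses
   turn into true shifted costs, and the common shift b d_t cancels. *)
Lemma fsf_step (W : nat -> R) (dt u0 u1 : nat) :
  weights_pos W -> (dt <= D)%nat -> In u0 I -> In u1 I ->
  rsum (map (fun a => p W a * (cost h b a dt - cost h b u0 dt
        + potential (Wn W a dt) u1 / eta)) I)
  <= potential W u0 / eta + fsf_rate
     + (if Nat.eqb u0 u1 then 0 else 1) * ln (INR (length I) / alpha) / eta.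
Proof.
  intros HW Hdt H0 H1.
  set (sw := (if Nat.eqb u0 u1 then 0 else 1) * ln (INR (length I) / alpha)).
  set (A := fun a => rsum (map (fun i => wprob W i * ct W a i dt) I)).
  set (B := fun a => rsum (map (fun i => wprob W i * (ct W a i dt) ^ 2) I)).
  set (K := - cost h b u0 dt + potential W u0 / eta + alpha / eta + sw / eta).
  assert (Hpt : forall a, In a I ->
     p W a * (cost h b a dt - cost h b u0 dt + potential (Wn W a dt) u1 / eta)
     <= p W a * cost h b a dt + K * p W a - p W a * A a + eta / 2 * (p W a * B a)
        + p W a * ct W a u0 dt).
  { intros a Ha. pose proof (pprob_pos W a HW Ha).
    pose proof (potential_Wnext_le W a dt u0 u1 HW H0 H1 Hdt) as Hpot.
    apply Rle_trans with (p W a * (cost h b a dt + K - A a + eta / 2 * B a + ct W a u0 dt)).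
    - apply Rmult_le_compat_l; [lra|]. unfold K, A, B, sw. unfold Rdiv in *. lra.
    - right. ring. }
  eapply Rle_trans; [apply rsum_le; exact Hpt|].
  repeat rewrite ?rsum_plus, ?rsum_minus. rewrite !rsum_scal, rsum_pprob by easy.
  assert (HA : rsum (map (fun a => p W a * A a) I)
               = rsum (map (fun i => wprob W i * (vSe h b i dt + beta D h b)) I)).
  { unfold A. rewrite rsum_mul_rsum_comm.
    apply rsum_ext. intros i Hi. rewrite ctilde_mean; easy. }
  assert (HB : rsum (map (fun a => p W a * B a) I) = rsum (map (fun i =>
                 wprob W i * ((vSe h b i dt + beta D h b) ^ 2 / Pge I gamma W i)) I)).
  { unfold B. rewrite rsum_mul_rsum_comm.
    apply rsum_ext. intros i Hi. rewrite ctilde_second_moment; easy. }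
  assert (Hshift : rsum (map (fun i => wprob W i * (vSe h b i dt + beta D h b)) I)
                   = rsum (map (fun i => wprob W i * cost h b i dt) I) + beta D h b - b * INR dt).
  { rewrite (rsum_ext _ (fun i => wprob W i * cost h b i dt + (beta D h b - b * INR dt) * wprob W i))
      by (intros; rewrite vSe_cost; ring).
    rewrite rsum_plus, rsum_scal, rsum_wprob by easy. ring. }
  rewrite HA, HB, Hshift, ctilde_mean, vSe_cost by easy.
  pose proof (rsum_pprob_cost_le W dt HW Hdt).
  pose proof (rsum_wprob_second_moment_le W dt HW Hdt).
  unfold fsf_rate, K. unfold Rdiv in *. nra.
Qed.

Definition seq_expect (d : nat -> nat) (t : nat) (W : nat -> R) (n : nat)
  (f : list nat -> R) : R :=
  rsum (map (fun s => seq_prob h b D I eta gamma alpha d t W s * f s) (all_seqs I n)).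

Lemma seq_expect_0 (d : nat -> nat) (t : nat) (W : nat -> R) (f : list nat -> R) :
  seq_expect d t W 0 f = f [].
Proof. cbn. ring. Qed.

Lemma seq_expect_S (d : nat -> nat) (t : nat) (W : nat -> R) (n : nat) (f : list nat -> R) :
  seq_expect d t W (S n) f =
  rsum (map (fun a => p W a * seq_expect d (S t) (Wn W a (d t)) n (fun r => f (a :: r))) I).
Proof.
  unfold seq_expect. simpl all_seqs. rewrite rsum_flat_map. apply rsum_ext. intros a _.
  rewrite map_map, <- rsum_scal. apply rsum_ext. intros. simpl seq_prob. ring.
Qed.

Lemma seq_expect_plus (d : nat -> nat) (t : nat) (W : nat -> R) (n : nat)
  (f g : list nat -> R) :
  seq_expect d t W n (fun s => f s + g s) = seq_expect d t W n f + seq_expect d t W n g.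
Proof. unfold seq_expect. rewrite <- rsum_plus. apply rsum_ext. intros. ring. Qed.

Lemma seq_expect_const (d : nat -> nat) (n t : nat) (W : nat -> R) (c : R) :
  weights_pos W -> seq_expect d t W n (fun _ => c) = c.
Proof.
  revert t W. induction n as [|n IH]; intros t W HW; [apply seq_expect_0|].
  rewrite seq_expect_S, (rsum_ext _ (fun a => c * p W a)).
  - rewrite rsum_scal, rsum_pprob by easy. ring.
  - intros a _. rewrite IH by (apply Wnext_pos; easy). ring.
Qed.

Lemma seq_expect_le (d : nat -> nat) (n t : nat) (W : nat -> R) (f g : list nat -> R) :
  weights_pos W ->
  (forall s, length s = n -> (forall x, In x s -> In x I) -> f s <= g s) ->
  seq_expect d t W n f <= seq_expect d t W n g.
Proof.
  revert t W f g. induction n as [|n IH]; intros t W f g HW Hfg.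
  - rewrite !seq_expect_0. apply Hfg; [easy|intros x []].
  - rewrite !seq_expect_S. apply rsum_le. intros a Ha.
    apply Rmult_le_compat_l; [left; apply pprob_pos; easy|].
    apply IH; [apply Wnext_pos; easy|]. intros s Hs Hx. apply Hfg; [simpl; auto|].
    intros x [<-|Hx']; auto.
Qed.

Lemma seq_expect_path_cons (d : nat -> nat) (t : nat) (W : nat -> R) (n u0 : nat)
  (rest : list nat) : weights_pos W ->
  seq_expect d t W (S n) (fun s => path_cost h b d t s - path_cost h b d t (u0 :: rest)) =
  rsum (map (fun a => p W a * (cost h b a (d t) - cost h b u0 (d t)
     + seq_expect d (S t) (Wn W a (d t)) n
         (fun s => path_cost h b d (S t) s - path_cost h b d (S t) rest))) I).
Proof.
  intros HW. rewrite seq_expect_S. apply rsum_ext. intros a _. f_equal.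
  rewrite <- (seq_expect_const d n (S t) (Wn W a (d t)) (cost h b a (d t) - cost h b u0 (d t)))
    at 1 by (apply Wnext_pos; easy).
  rewrite <- seq_expect_plus. unfold seq_expect. apply rsum_ext. intros s _. simpl. ring.
Qed.

Lemma seq_expect_regret_le (d : nat -> nat) (rest : list nat) :
  forall (u0 t : nat) (W : nat -> R), weights_pos W -> In u0 I ->
  (forall x, In x rest -> In x I) ->
  (forall k, (t <= k <= t + length rest)%nat -> (d k <= D)%nat) ->
  seq_expect d t W (S (length rest))
    (fun s => path_cost h b d t s - path_cost h b d t (u0 :: rest))
  <= potential W u0 / eta + INR (S (length rest)) * fsf_rate
     + (INR (complexity (u0 :: rest)) - 1) * ln (INR (length I) / alpha) / eta.
Proof.
  induction rest as [|u1 r IH]; intros u0 t W HW H0 Hr Hd;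
    rewrite seq_expect_path_cons by easy;
    pose proof (Hd t ltac:(lia)) as Hdt.
  - pose proof (fsf_step W (d t) u0 u0 HW Hdt H0 H0) as Hstep.
    rewrite Nat.eqb_refl in Hstep.
    eapply Rle_trans; [|eapply Rle_trans; [exact Hstep|simpl INR; lra]].
    apply rsum_le. intros a Ha. rewrite seq_expect_0.
    apply Rmult_le_compat_l; [left; apply pprob_pos; easy|].
    pose proof (potential_nonneg _ u0 (Wnext_pos W a (d t) HW) H0).
    assert (0 <= potential (Wn W a (d t)) u0 / eta)
      by (apply Rmult_le_pos; [|left; apply Rinv_0_lt_compat]; easy).
    simpl. lra.
  - assert (H1 : In u1 I) by (apply Hr; left; easy).
    set (C := INR (S (length r)) * fsf_rate
              + (INR (complexity (u1 :: r)) - 1) * ln (INR (length I) / alpha) / eta).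
    apply Rle_trans with (rsum (map (fun a => p W a * (cost h b a (d t) - cost h b u0 (d t)
        + potential (Wn W a (d t)) u1 / eta) + C * p W a) I)).
    + apply rsum_le. intros a Ha. rewrite (Rmult_comm C), <- Rmult_plus_distr_l.
      apply Rmult_le_compat_l; [left; apply pprob_pos; easy|].
      pose proof (IH u1 (S t) (Wn W a (d t)) (Wnext_pos W a (d t) HW) H1
                    (fun x Hx => Hr x (or_intror Hx))
                    ltac:(intros k Hk; apply Hd; simpl; lia)).
      unfold C. simpl length in *. lra.
    + rewrite rsum_plus, rsum_scal, rsum_pprob by easy.
      pose proof (fsf_step W (d t) u0 u1 HW Hdt H0 H1).
      unfold C. change (length (u1 :: r)) with (S (length r)).
      change (complexity (u0 :: u1 :: r))
        with ((if Nat.eqb u0 u1 then 0 else 1) + complexity (u1 :: r))%nat.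
      rewrite plus_INR, (S_INR (S (length r))).
      destruct (Nat.eqb u0 u1); simpl INR; unfold Rdiv in *; lra.
Qed.

Lemma In_all_seqs (n : nat) (s : list nat) :
  In s (all_seqs I n) -> length s = n /\ (forall x, In x s -> In x I).
Proof.
  revert s. induction n as [|n IH]; intros s Hs; simpl in Hs.
  - destruct Hs as [<-|[]]. split; [easy|intros x []].
  - apply in_flat_map in Hs. destruct Hs as [a [Ha Hs]]. apply in_map_iff in Hs.
    destruct Hs as [r [<- Hr]]. destruct (IH r Hr) as [Hlen Hx].
    split; [simpl; auto|]. intros x [<-|Hx']; auto.
Qed.

Lemma repeat_In_all_seqs (n i : nat) : In i I -> In (repeat i n) (all_seqs I n).
Proof.
  intros Hi. induction n as [|n IH]; simpl; [auto|].
  apply in_flat_map. exists i. split; [easy|]. apply in_map. easy.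
Qed.

Lemma benchmark_attained (d : nat -> nat) (T S : nat) : (1 <= S)%nat ->
  exists u, In u (all_seqs I T) /\ (complexity u <= S)%nat /\
            benchmark h b I d T S = path_cost h b d 1 u.
Proof.
  intros HS. unfold benchmark.
  assert (Hi : exists i, In i I) by (destruct I as [|i I']; [congruence|exists i; left; easy]).
  destruct Hi as [i Hi].
  set (l := filter (fun s => Nat.leb (complexity s) S) (all_seqs I T)).
  assert (Hrep : In (repeat i T) l).
  { apply filter_In. split; [apply repeat_In_all_seqs; easy|].
    apply Nat.leb_le. pose proof (complexity_repeat_le i T). lia. }
  assert (Hmin : In (list_min (map (path_cost h b d 1) l)) (map (path_cost h b d 1) l)).
  { destruct (map (path_cost h b d 1) l) as [|x r] eqn:Hl.
    - apply map_eq_nil in Hl. rewrite Hl in Hrep. destruct Hrep.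
    - simpl. clear. revert x. induction r as [|y r IH]; intros x; [left; easy|].
      simpl fold_right. destruct (Rle_dec y (fold_right Rmin x r)).
      + rewrite Rmin_left by easy. right; left; easy.
      + rewrite Rmin_right by lra. destruct (IH x) as [E|E]; [left|right; right]; easy. }
  apply in_map_iff in Hmin. destruct Hmin as [u [Eu Hu]].
  apply filter_In in Hu. destruct Hu as [Hu Hc]. apply Nat.leb_le in Hc.
  exists u. auto.
Qed.

Lemma path_cost_bounds (d : nat -> nat) (s : list nat) (t : nat) :
  (forall x, In x s -> In x I) -> (forall k, (t <= k < t + length s)%nat -> (d k <= D)%nat) ->
  0 <= path_cost h b d t s <= INR (length s) * beta D h b.
Proof.
  revert t. induction s as [|a s IH]; intros t Hs Hd; simpl path_cost; [simpl; lra|].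
  pose proof (cost_bounds h b D a (d t) h_pos b_pos
                (I_le_D a (Hs a (or_introl eq_refl))) (Hd t ltac:(simpl; lia))).
  pose proof (IH (S t) (fun x Hx => Hs x (or_intror Hx))
                ltac:(intros k Hk; apply Hd; simpl; lia)).
  simpl length. rewrite S_INR. lra.
Qed.

Lemma regret_seq_expect (d : nat -> nat) (T S : nat) :
  FSF_expected_regret h b D I eta gamma alpha d T S =
  seq_expect d 1 (fun _ => 1) T (fun s => path_cost h b d 1 s - benchmark h b I d T S).
Proof. reflexivity. Qed.

Lemma regret_le_T_beta (d : nat -> nat) (T S : nat) : (1 <= S)%nat ->
  (forall t, (1 <= t <= T)%nat -> (d t <= D)%nat) ->
  FSF_expected_regret h b D I eta gamma alpha d T S <= INR T * beta D h b.
Proof.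
  intros HS Hd. rewrite regret_seq_expect.
  destruct (benchmark_attained d T S HS) as [u [Hu [_ ->]]].
  destruct (In_all_seqs T u Hu) as [Hlu Hxu].
  assert (H1 : weights_pos (fun _ => 1)) by (intros i _; lra).
  rewrite <- (seq_expect_const d T 1 _ (INR T * beta D h b) H1).
  apply seq_expect_le; [easy|]. intros s Hs Hx.
  pose proof (path_cost_bounds d s 1 Hx ltac:(intros k Hk; apply Hd; lia)).
  pose proof (path_cost_bounds d u 1 Hxu ltac:(intros k Hk; apply Hd; lia)).
  rewrite Hs in *. lra.
Qed.

Lemma regret_le_fsf_rate (d : nat -> nat) (T S : nat) : (1 <= S)%nat -> (1 <= T)%nat ->
  (forall t, (1 <= t <= T)%nat -> (d t <= D)%nat) -> 0 <= ln (INR (length I) / alpha) ->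
  FSF_expected_regret h b D I eta gamma alpha d T S <=
  ln (INR (length I)) / eta + INR T * fsf_rate
  + (INR S - 1) * ln (INR (length I) / alpha) / eta.
Proof.
  intros HS HT Hd Hln. rewrite regret_seq_expect.
  destruct (benchmark_attained d T S HS) as [u [Hu [Hc ->]]].
  destruct (In_all_seqs T u Hu) as [Hlu Hxu].
  destruct u as [|u0 rest]; [simpl in Hlu; lia|]. subst T.
  assert (H1 : weights_pos (fun _ => 1)) by (intros i _; lra).
  pose proof (seq_expect_regret_le d rest u0 1 (fun _ => 1) H1 (Hxu u0 (or_introl eq_refl))
     (fun x Hx => Hxu x (or_intror Hx)) ltac:(intros k Hk; apply Hd; simpl; lia)) as Hreg.
  unfold potential, Wtot in Hreg. rewrite ln_1, rsum_const, Rmult_1_r, Rminus_0_r in Hreg.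
  eapply Rle_trans; [exact Hreg|].
  apply le_INR in Hc. pose proof (Rinv_0_lt_compat eta eta_pos).
  assert (Hsw : (INR (complexity (u0 :: rest)) - 1) * ln (INR (length I) / alpha)
                <= (INR S - 1) * ln (INR (length I) / alpha)) by (apply Rmult_le_compat_r; lra).
  unfold Rdiv. apply Rmult_le_compat_r with (r := / eta) in Hsw; [|lra].
  simpl length. lra.
Qed.

End FixedShare.

Lemma one_add_ln_le (c N : R) : 0 < c -> 2 <= N ->
  1 + ln (c * N) <= ln (c * N ^ 3 + N + 2).
Proof.
  intros Hc HN. pose proof exp_le_3. pose proof (exp_pos 1).
  assert (HcN : 0 < c * N) by (apply Rmult_lt_0_compat; lra).
  rewrite <- (ln_exp 1) at 1. rewrite <- ln_mult by easy.
  apply ln_le; [apply Rmult_lt_0_compat; easy|].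
  assert (exp 1 * (c * N) <= 4 * (c * N)) by (apply Rmult_le_compat_r; lra).
  assert (4 * (c * N) <= N ^ 2 * (c * N)) by (apply Rmult_le_compat_r; nra).
  replace (c * N ^ 3) with (N ^ 2 * (c * N)) by ring. lra.
Qed.

Lemma ln_add_one_le_ln_mul (N T : R) : 0 < N -> 3 <= T -> ln N + 1 <= ln (N * T).
Proof.
  intros HN HT. rewrite ln_mult by lra.
  enough (1 <= ln T) by lra.
  rewrite <- (ln_exp 1). apply ln_le; [apply exp_pos|]. pose proof exp_le_3. lra.
Qed.

(* With gamma = 1 / (2 beta T) and alpha = 1 / T the exploration and sharing terms
   contribute 1/2 and 1/eta, and ln(N/alpha) = ln(NT) absorbs both ln N and 1/eta. *)
Lemma fsf_rate_tuned_le (N T bt Sr eta : R) :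
  2 <= N -> 3 <= T -> 1 <= bt * T -> 0 < eta ->
  ln N / eta
  + T * (1 / (2 * bt * T) * bt + 4 * eta * bt ^ 2 * (1 + ln (N / (1 / (2 * bt * T))))
         + 1 / T / eta)
  + (Sr - 1) * ln (N / (1 / T)) / eta
  <= 1 / 2 + Sr * ln (N * T) / eta + eta * (4 * bt ^ 2 * T * ln (2 * bt * T * N ^ 3 + N + 2)).
Proof.
  intros HN HT HbT He.
  assert (Hbt : 0 < bt) by nra.
  replace (N / (1 / (2 * bt * T))) with (2 * bt * T * N) by (field; lra).
  replace (N / (1 / T)) with (N * T) by (field; lra).
  pose proof (one_add_ln_le (2 * bt * T) N ltac:(nra) HN) as HL.
  pose proof (ln_add_one_le_ln_mul N T ltac:(lra) HT) as HNT.
  assert (Hsq : 0 <= eta * (4 * bt ^ 2 * T)) by (apply Rmult_le_pos; nra).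
  assert (eta * (4 * bt ^ 2 * T) * (1 + ln (2 * bt * T * N))
          <= eta * (4 * bt ^ 2 * T) * ln (2 * bt * T * N ^ 3 + N + 2))
    by (apply Rmult_le_compat_l; easy).
  assert ((ln N + 1) / eta <= ln (N * T) / eta)
    by (apply Rmult_le_compat_r; [left; apply Rinv_0_lt_compat|]; easy).
  replace (T * (1 / (2 * bt * T) * bt + 4 * eta * bt ^ 2 * (1 + ln (2 * bt * T * N))
           + 1 / T / eta))
    with (1 / 2 + eta * (4 * bt ^ 2 * T) * (1 + ln (2 * bt * T * N)) + 1 / eta)
    by (field; lra).
  replace (Sr * ln (N * T) / eta) with (ln (N * T) / eta + (Sr - 1) * ln (N * T) / eta)
    by (field; lra).
  replace ((ln N + 1) / eta) with (ln N / eta + 1 / eta) in * by (field; lra).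
  lra.
Qed.

Lemma tuned_gamma_range (bt T : R) : 2 * bt * T > 1 -> 0 < 1 / (2 * bt * T) < 1.
Proof.
  intros H. split; [apply Rdiv_lt_0_compat; lra|].
  apply Rmult_lt_reg_r with (2 * bt * T); [lra|].
  unfold Rdiv. rewrite Rmult_assoc, Rinv_l; lra.
Qed.

Lemma regret_le_tuned (T D : nat) (h b : R) (I : list nat) (S : nat) (d : nat -> nat) (eta : R) :
  (3 <= T)%nat -> 0 < h -> 0 < b -> NoDup I -> (forall i, In i I -> (i <= D)%nat) ->
  (2 <= length I)%nat -> 1 <= beta D h b * INR T -> (1 <= S)%nat -> 0 < eta ->
  (forall t, (1 <= t <= T)%nat -> (d t <= D)%nat) ->
  FSF_expected_regret h b D I eta (1 / (2 * beta D h b * INR T)) (1 / INR T) d T S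
  <= 1 / 2 + INR S * ln (INR (length I) * INR T) / eta
     + eta * (4 * beta D h b ^ 2 * INR T
              * ln (2 * beta D h b * INR T * INR (length I) ^ 3 + INR (length I) + 2)).
Proof.
  intros HT Hh Hb Hnd HID HN HbT HS He Hd.
  assert (HT3 : 3 <= INR T) by (apply le_INR in HT; simpl in HT; lra).
  assert (HN2 : 2 <= INR (length I)) by (apply le_INR in HN; simpl in HN; lra).
  assert (Hne : I <> []) by (intros ->; simpl in HN; lia).
  assert (Hgamma : 1 / (2 * beta D h b * INR T) <= 1 / 2).
  { apply Rmult_le_reg_r with (2 * beta D h b * INR T); [lra|].
    unfold Rdiv. rewrite Rmult_assoc, Rinv_l; lra. }
  eapply Rle_trans; [apply regret_le_fsf_rate; auto; try lia|].
  - apply tuned_gamma_range; lra.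
  - apply Rdiv_lt_0_compat; lra.
  - apply ln_ge_0. replace (INR (length I) / (1 / INR T)) with (INR (length I) * INR T)
      by (field; lra). nra.
  - apply fsf_rate_tuned_le; lra.
Qed.

Lemma beta_pos (D : nat) (h b : R) : (1 <= D)%nat -> 0 < h -> 0 < beta D h b.
Proof.
  intros HD Hh. apply le_INR in HD. simpl in HD. pose proof (Rmax_l h b).
  unfold beta. nra.
Qed.

Lemma ln_gt_half (y : R) : 2 <= y -> / 2 < ln y.
Proof. intros Hy. pose proof ln_lt_2. pose proof (ln_le 2 y ltac:(lra) Hy). lra. Qed.

Lemma tuned_logs_gt_half (N T bt : R) : 2 <= N -> 1 <= T -> 0 < bt ->
  / 2 < ln (N * T) /\ / 2 < ln (2 * bt * T * N ^ 3 + N + 2).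
Proof.
  intros HN HT Hbt. split; apply ln_gt_half; [nra|].
  pose proof (Rmult_le_pos (2 * bt * T) (N ^ 3) ltac:(nra) (pow_le N 3 ltac:(lra))). lra.
Qed.

Lemma sqrt_div_mul (P Q : R) : 0 < P -> 0 < Q -> sqrt (P / Q) * Q = sqrt (P * Q).
Proof.
  intros HP HQ. replace (P * Q) with (P / Q * (Q * Q)) by (field; lra).
  rewrite sqrt_mult, sqrt_square; try lra. left; apply Rdiv_lt_0_compat; easy. nra.
Qed.

Lemma div_sqrt_div (P Q : R) : 0 < P -> 0 < Q -> P / sqrt (P / Q) = sqrt (P * Q).
Proof.
  intros HP HQ. pose proof (sqrt_lt_R0 (P / Q) ltac:(apply Rdiv_lt_0_compat; easy)).
  rewrite <- sqrt_div_mul by easy.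
  apply Rmult_eq_reg_r with (sqrt (P / Q)); [|lra].
  replace (sqrt (P / Q) * Q * sqrt (P / Q)) with (sqrt (P / Q) * sqrt (P / Q) * Q) by ring.
  rewrite sqrt_sqrt by (left; apply Rdiv_lt_0_compat; easy). field. lra.
Qed.

Lemma short_horizon_le (T bt x L : R) : 1 <= T -> 0 < bt -> / 2 < x -> / 2 < L ->
  T <= 2 \/ bt * T < 1 -> T * bt <= 4 * bt * sqrt (T * x * L) + 2.
Proof.
  intros HT Hbt Hx HL [HT2|HbT].
  - assert (1 / 2 <= sqrt (T * x * L)).
    { rewrite <- (sqrt_pow2 (1 / 2)) by lra. apply sqrt_le_1_alt.
      assert (/ 4 <= x * L) by nra. nra. }
    nra.
  - pose proof (sqrt_pos (T * x * L)). nra.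
Qed.

Lemma regret_short_horizon (T D : nat) (h b : R) (I : list nat) (S : nat) (d : nat -> nat)
  (eta : R) :
  (1 <= T)%nat -> (1 <= D)%nat -> 0 < h -> 0 < b -> NoDup I ->
  (forall i, In i I -> (i <= D)%nat) -> (2 <= length I)%nat -> 2 * beta D h b * INR T > 1 ->
  (1 <= S)%nat -> (forall t, (1 <= t <= T)%nat -> (d t <= D)%nat) ->
  INR T <= 2 \/ beta D h b * INR T < 1 ->
  FSF_expected_regret h b D I eta (1 / (2 * beta D h b * INR T)) (1 / INR T) d T S
  <= 4 * beta D h b * sqrt (INR T * ln (INR (length I) * INR T)
       * ln (2 * beta D h b * INR T * INR (length I) ^ 3 + INR (length I) + 2)) + 2.
Proof.
  intros HT HD Hh Hb Hnd HID HN HbT HS Hd Hshort.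
  pose proof (beta_pos D h b HD Hh).
  apply le_INR in HT, HN. simpl in HT, HN.
  destruct (tuned_logs_gt_half (INR (length I)) (INR T) (beta D h b)) as [Hx HL]; try lra.
  eapply Rle_trans; [|apply short_horizon_le; easy].
  apply regret_le_T_beta; auto.
  - intros ->. simpl in HN. lra.
  - apply tuned_gamma_range. easy.
  - apply Rdiv_lt_0_compat; lra.
Qed.

(* For eta = sqrt (P / Q) the two eta-dependent terms S ln(NT) / eta and eta Q of
   the tuned bound are both multiples of sqrt (P Q). *)
Lemma regret_balanced (T D : nat) (h b : R) (I : list nat) (S : nat) (d : nat -> nat) (P : R) :
  (3 <= T)%nat -> (1 <= D)%nat -> 0 < h -> 0 < b -> NoDup I ->
  (forall i, In i I -> (i <= D)%nat) -> (2 <= length I)%nat -> 1 <= beta D h b * INR T ->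
  (1 <= S)%nat -> (forall t, (1 <= t <= T)%nat -> (d t <= D)%nat) -> 0 < P ->
  FSF_expected_regret h b D I
    (sqrt (P / (4 * beta D h b ^ 2 * INR T
                * ln (2 * beta D h b * INR T * INR (length I) ^ 3 + INR (length I) + 2))))
    (1 / (2 * beta D h b * INR T)) (1 / INR T) d T S
  <= 1 / 2 + (INR S * ln (INR (length I) * INR T) / P + 1)
             * (2 * beta D h b * sqrt (INR T * P
                  * ln (2 * beta D h b * INR T * INR (length I) ^ 3 + INR (length I) + 2))).
Proof.
  intros HT HD Hh Hb Hnd HID HN HbT HS Hd HP.
  pose proof (beta_pos D h b HD Hh) as Hbt.
  set (L := ln (2 * beta D h b * INR T * INR (length I) ^ 3 + INR (length I) + 2)).
  set (x := ln (INR (length I) * INR T)).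
  set (Q := 4 * beta D h b ^ 2 * INR T * L).
  assert (HT1 : 1 <= INR T) by (apply le_INR in HT; simpl in HT; lra).
  assert (HN2 : 2 <= INR (length I)) by (apply le_INR in HN; simpl in HN; lra).
  destruct (tuned_logs_gt_half (INR (length I)) (INR T) (beta D h b)) as [Hx HL]; try lra.
  fold x L in Hx, HL.
  assert (HQ : 0 < Q).
  { unfold Q. pose proof (pow_lt (beta D h b) 2 Hbt).
    apply Rmult_lt_0_compat; [apply Rmult_lt_0_compat; [apply Rmult_lt_0_compat|]|]; lra. }
  assert (HPQ : sqrt (P * Q) = 2 * beta D h b * sqrt (INR T * P * L)).
  { replace (P * Q) with ((2 * beta D h b) ^ 2 * (INR T * P * L)) by (unfold Q; ring).
    rewrite sqrt_mult_alt, sqrt_pow2 by (try apply pow2_ge_0; lra). easy. }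
  eapply Rle_trans;
    [apply regret_le_tuned; auto; apply sqrt_lt_R0, Rdiv_lt_0_compat; easy|].
  fold L x Q. rewrite sqrt_div_mul by easy.
  replace (INR S * x / sqrt (P / Q)) with (INR S * x / P * (P / sqrt (P / Q)))
    by (field; split; [apply Rgt_not_eq, sqrt_lt_R0, Rdiv_lt_0_compat|]; lra).
  rewrite div_sqrt_div, HPQ by easy. lra.
Qed.

Theorem theorem2 :
  forall (T D : nat) (h b : R) (I : list nat) (S : nat),
    (1 <= T)%nat -> (1 <= D)%nat -> 0 < h -> 0 < b ->
    NoDup I -> (forall i, In i I -> (i <= D)%nat) ->
    (2 <= length I)%nat ->
    2 * beta D h b * INR T > 1 ->
    (1 <= S)%nat ->
    let N := INR (length I) in
    let bt := beta D h b in
    let L := ln (2 * bt * INR T * N ^ 3 + N + 2) in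
    forall d : nat -> nat,
      (forall t, (1 <= t <= T)%nat -> (d t <= D)%nat) ->
      (* (a) *)
      FSF_expected_regret h b D I
        (sqrt (ln (N * INR T) / (4 * bt ^ 2 * INR T * L)))
        (1 / (2 * bt * INR T)) (1 / INR T) d T S
      <= 2 * (INR S + 1) * bt * sqrt (INR T * ln (N * INR T) * L)
         + 2 * bt * sqrt (INR T * ln N) + 2
      /\
      (* (b) *)
      FSF_expected_regret h b D I
        (sqrt (INR S * ln (N * INR T) / (4 * bt ^ 2 * INR T * L)))
        (1 / (2 * bt * INR T)) (1 / INR T) d T S
      <= 4 * bt * sqrt (INR S * INR T * ln (N * INR T) * L)
         + 2 * bt * sqrt (INR T * ln N) + 2.
Proof.
  intros T D h b I S HT HD Hh Hb Hnd HID HN H2bT HS N bt L d Hd.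
  assert (Hbt : 0 < bt) by (apply beta_pos; easy).
  assert (HS1 : 1 <= INR S) by (apply le_INR in HS; simpl in HS; lra).
  destruct (tuned_logs_gt_half N (INR T) bt) as [Hx HL];
    [apply le_INR in HN; simpl in HN; unfold N; lra|apply le_INR in HT; simpl in HT; lra|easy|].
  fold L in HL. set (x := ln (N * INR T)) in *.
  pose proof (Rmult_le_pos _ _ (Rlt_le _ _ Hbt) (sqrt_pos (INR T * ln N))).
  pose proof (Rmult_le_pos _ _ (Rlt_le _ _ Hbt) (sqrt_pos (INR T * x * L))).
  assert (bt * sqrt (INR T * x * L) <= bt * sqrt (INR S * INR T * x * L)).
  { apply Rmult_le_compat_l, sqrt_le_1_alt; [lra|].
    pose proof (Rmult_le_pos (INR T * x) L ltac:(apply Rmult_le_pos; [apply pos_INR|lra]) ltac:(lra)).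
    nra. }
  destruct (Rle_lt_dec (INR T) 2) as [HT2|HT3];
    [|destruct (Rlt_le_dec (bt * INR T) 1) as [HbT|HbT]].
  1,2: split; (eapply Rle_trans; [apply regret_short_horizon; auto|]);
    fold N bt L x; nra.
  assert (HT3' : (3 <= T)%nat) by (change 2 with (INR 2) in HT3; apply INR_lt in HT3; lia).
  split.
  - eapply Rle_trans; [apply regret_balanced; auto; lra|].
    fold N bt L x. replace (INR S * x / x) with (INR S) by (field; lra). nra.
  - eapply Rle_trans; [apply regret_balanced; auto; nra|].
    fold N bt L x. replace (INR S * x / (INR S * x)) with 1 by (field; nra).
    replace (INR T * (INR S * x) * L) with (INR S * INR T * x * L) by ring. lra.
Qed.
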